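(* Let $s>0$, $\mu\in\mathbb{R}$, $\tilde\varepsilon=s\varepsilon$, $\tilde\delta=s\delta$, and let $\varphi\in H^1_2((0,R))$, smooth on $(0,R)$, satisfy on $(0,R)$ $$-\partial_z\Big(\Big(\frac{4\tilde\varepsilon}{3}+\tilde\delta+\gamma P_0\Big)\frac{\partial_z\varphi}{z^2}\Big)+4\frac{\partial_zP_0}{z^3}\varphi=\frac{\mu\varrho_0}{z^2}\varphi.$$ Then there is $C>0$ such that $|\varphi(z)|\le Cz^3$ and $|\varphi'(z)|\le Cz^2$ for all $z$ near $0$.
   Context: Fix constants $\varepsilon>0$, $\delta>0$, $K>0$ and $6/5<\gamma<4/3$. Let $\varrho_0:[0,R]\to[0,\infty)$ be a Lane–Emden stationary density of radius $R>0$: $\varrho_0$ is smooth and positive on $[0,R)$, $\varrho_0(R)=0$, $P_0:=K\varrho_0^\gamma$ satisfies $\partial_z P_0(z)=-\frac{4\pi\varrho_0(z)}{z^2}\int_0^z\varrho_0(y)y^2\,dy$, and $\varrho_0(z)$ is comparable to $(R-z)^{1/(\gamma-1)}$ for $z$ near $R$. $H^1_2((0,R))$ is the completion of $\{u\in C^\infty([0,R]):u(0)=0\}$ in the norm $\|u\|^2=\int_0^R\frac{|u'|^2+|u|^2}{z^2}dz$. *)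

From Stdlib Require Import Reals Lra.
Open Scope R_scope.

(* Real power, set to 0 for non-positive base (P0 = K rho0^gamma). *)
Definition rpow (x y : R) : R :=
  match Rlt_dec 0 x with left _ => Rpower x y | right _ => 0 end.

Definition smooth_on (a b : R) (f : R -> R) : Prop :=
  exists D : nat -> R -> R,
    (forall x, a < x < b -> D O x = f x) /\
    (forall n x, a < x < b -> derivable_pt_lim (D n) x (D (S n) x)).

Definition smooth_R (f : R -> R) : Prop :=
  exists D : nat -> R -> R,
    (forall x, D O x = f x) /\
    (forall n x, derivable_pt_lim (D n) x (D (S n) x)).

Definition is_RInt (f : R -> R) (a b v : R) : Prop :=
  exists pr : Riemann_integrable f a b, RiemannInt pr = v.

(* The (possibly improper) integral over (0,R) of a nonnegative integrand g
   is at most e: all Riemann integrals over compact [a,b] in (0,R) are <= e. *)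
Definition int_0R_le (Rad : R) (g : R -> R) (e : R) : Prop :=
  forall a b (pr : Riemann_integrable g a b),
    0 < a -> a < b -> b < Rad -> RiemannInt pr <= e.

Definition lane_emden (K gam Rad : R) (rho0 : R -> R) : Prop :=
  0 < Rad /\
  (* smooth on [0,Rad): restriction of a smooth function on (-eta,Rad) *)
  (exists eta g, 0 < eta /\ smooth_on (- eta) Rad g /\
     forall z, 0 <= z < Rad -> g z = rho0 z) /\
  (forall z, 0 <= z < Rad -> 0 < rho0 z) /\
  rho0 Rad = 0 /\
  (* hydrostatic equilibrium for P0 = K rho0^gamma *)
  (forall z, 0 < z < Rad ->
     exists m, is_RInt (fun y => rho0 y * y ^ 2) 0 z m /\
       derivable_pt_lim (fun x => K * rpow (rho0 x) gam) z
         (- (4 * PI * rho0 z / z ^ 2) * m)) /\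
  (exists eta c1 c2, 0 < eta /\ 0 < c1 /\ 0 < c2 /\
     forall z, Rad - eta < z < Rad ->
       c1 * Rpower (Rad - z) (1 / (gam - 1)) <= rho0 z /\
       rho0 z <= c2 * Rpower (Rad - z) (1 / (gam - 1))).

(* phi (with classical derivative dphi on (0,Rad)) belongs to H^1_2((0,Rad)):
   it is a limit, in the norm int (|u'|^2+|u|^2)/z^2, of smooth u on [0,Rad]
   with u(0)=0. *)
Definition in_H12 (Rad : R) (phi dphi : R -> R) : Prop :=
  exists (u du : nat -> R -> R),
    (forall n, smooth_R (u n)) /\
    (forall n x, derivable_pt_lim (u n) x (du n x)) /\
    (forall n, u n 0 = 0) /\
    (forall e, 0 < e -> exists N, forall n, (N <= n)%nat ->
       int_0R_le Rad
         (fun z => ((du n z - dphi z) ^ 2 + (u n z - phi z) ^ 2) / z ^ 2) e).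

From Stdlib Require Import Reals Lra ClassicalEpsilon.
Open Scope R_scope.

(* Write A0 = 4 eps~/3 + delta~ > 0 and introduce the flux
   w = (A0 + gamma P0) phi' / z^2, so that  A0 |phi'| <= z^2 |w|.  Using the
   hydrostatic relation P0' = -4 pi rho0 m / z^2 with enclosed mass m(z) = O(z^3),
   the equation reads  w' = -(16 pi rho0 m / z^3 + mu rho0) phi / z^2,  hence
   |w'| <= Q |phi| / z^2  near 0.  On a short interval (Q eta^2 <= A0/2) these two
   inequalities bootstrap: phi is bounded, then |phi'| <= C z; membership in H^1_2
   (smooth approximants vanish at 0 and the weight 1/z^2 is not integrable) forces
   phi(0+) = 0, so integrating gives |phi| <= C z^2, then w is bounded,
   |phi'| <= C z^2 and finally |phi| <= C z^3. *)

Lemma derivable_pt_lim_local (f g : R -> R) (x l a b : R) : a < x < b ->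
  (forall y, a < y < b -> f y = g y) -> derivable_pt_lim f x l -> derivable_pt_lim g x l.
Proof.
  intros Hx Hfg Hd eps Heps.
  destruct (Hd eps Heps) as [[d Hdpos] Hdd].
  assert (Hp : 0 < Rmin d (Rmin (x - a) (b - x))) by (repeat apply Rmin_pos; lra).
  exists (mkposreal _ Hp). intros h Hh0 Hh. simpl in Hh.
  assert (Hd1 := Rmin_l d (Rmin (x - a) (b - x))).
  assert (Hd2 := Rmin_r d (Rmin (x - a) (b - x))).
  assert (Hd3 := Rmin_l (x - a) (b - x)). assert (Hd4 := Rmin_r (x - a) (b - x)).
  assert (Hh' : Rabs h < Rmin (x - a) (b - x)) by lra.
  apply Rabs_def2 in Hh'.
  rewrite <- (Hfg (x + h)) by lra. rewrite <- (Hfg x) by lra.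
  apply Hdd; simpl; auto; lra.
Qed.

Lemma derivable_pt_lim_continuity (f : R -> R) (x l : R) :
  derivable_pt_lim f x l -> continuity_pt f x.
Proof. intro H. apply derivable_continuous_pt. exists l. exact H. Qed.

Lemma derivable_pt_lim_linear (c x : R) : derivable_pt_lim (fun y => c * y) x c.
Proof.
  assert (H := derivable_pt_lim_scal id c x 1 (derivable_pt_lim_id x)).
  rewrite Rmult_1_r in H. exact H.
Qed.

Lemma derivable_pt_lim_recip (c x : R) : 0 < x ->
  derivable_pt_lim (fun y => - c / y) x (c / x ^ 2).
Proof.
  intro Hx.
  assert (H := derivable_pt_lim_div (fct_cte (- c)) id x 0 1
    (derivable_pt_lim_const (- c) x) (derivable_pt_lim_id x) ltac:(unfold id; lra)).
  replace (c / x ^ 2) with ((0 * id x - 1 * fct_cte (- c) x) / (id x)²)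
    by (unfold id, fct_cte, Rsqr; field; lra).
  exact H.
Qed.

Lemma derivable_pt_lim_power_primitive (c : R) (n : nat) (x : R) :
  derivable_pt_lim (fun y => c / INR (S n) * y ^ S n) x (c * x ^ n).
Proof.
  assert (H := derivable_pt_lim_scal (fun y => y ^ S n) (c / INR (S n)) x _
                 (derivable_pt_lim_pow x (S n))).
  assert (Hn : INR (S n) <> 0) by (apply not_0_INR; discriminate).
  replace (c * x ^ n) with (c / INR (S n) * (INR (S n) * x ^ Init.Nat.pred (S n)))
    by (simpl; field; exact Hn).
  exact H.
Qed.

Lemma Rabs_le_inv (x y : R) : Rabs x <= y -> - y <= x <= y.
Proof.
  intro H. assert (H1 := Rle_abs x). assert (H2 := Rle_abs (- x)).
  rewrite Rabs_Ropp in H2. lra.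
Qed.

Lemma mean_value_comparison (f f' g g' : R -> R) (a b : R) : a <= b ->
  (forall c, a <= c <= b -> derivable_pt_lim f c (f' c)) ->
  (forall c, a <= c <= b -> derivable_pt_lim g c (g' c)) ->
  (forall c, a <= c <= b -> Rabs (f' c) <= g' c) ->
  Rabs (f b - f a) <= g b - g a.
Proof.
  intros Hab Hf Hg Hb. destruct (Req_dec a b) as [->|Hne].
  { replace (f b - f b) with 0 by ring. rewrite Rabs_R0. lra. }
  destruct (MVT_cor2 (fun x => g x - f x) (fun x => g' x - f' x) a b ltac:(lra))
    as [c [Hc1 Hc2]].
  { intros c Hc. apply derivable_pt_lim_minus; auto. }
  destruct (MVT_cor2 (fun x => g x + f x) (fun x => g' x + f' x) a b ltac:(lra))
    as [c' [Hc1' Hc2']].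
  { intros c' Hc. apply derivable_pt_lim_plus; auto. }
  assert (B1' := Hb c ltac:(lra)). assert (B2' := Hb c' ltac:(lra)).
  apply Rabs_le_inv in B1'. apply Rabs_le_inv in B2'.
  assert (0 <= (g' c - f' c) * (b - a)) by (apply Rmult_le_pos; lra).
  assert (0 <= (g' c' + f' c') * (b - a)) by (apply Rmult_le_pos; lra).
  apply Rabs_le; lra.
Qed.

Lemma bounded_derivative_increment (f f' : R -> R) (L a b : R) : a <= b ->
  (forall c, a <= c <= b -> derivable_pt_lim f c (f' c)) ->
  (forall c, a <= c <= b -> Rabs (f' c) <= L) ->
  Rabs (f b - f a) <= L * (b - a).
Proof.
  intros Hab Hf Hb. replace (L * (b - a)) with (L * b - L * a) by ring.
  apply (mean_value_comparison f f' (fun x => L * x) (fun _ => L)); auto.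
  intros c _. apply derivable_pt_lim_linear.
Qed.

Definition vanishes_at_0 (f : R -> R) : Prop :=
  forall e, 0 < e -> exists d, 0 < d /\ forall t, 0 < t < d -> Rabs (f t) < e.

Lemma continuous_vanishes_at_0 (f : R -> R) :
  continuity_pt f 0 -> f 0 = 0 -> vanishes_at_0 f.
Proof.
  intros Hc Hf0 e He. destruct (Hc e He) as [d [Hd Hdd]].
  exists d. split; [exact Hd|]. intros t Ht.
  assert (H := Hdd t). unfold D_x, no_cond, dist in H; simpl in H.
  unfold R_dist in H. rewrite Hf0, !Rminus_0_r, (Rabs_pos_eq t) in H by lra.
  apply H. split; [split; [auto|lra]|lra].
Qed.

Lemma bound_of_vanishing (f : R -> R) (z X : R) : vanishes_at_0 f -> 0 < z ->
  (forall z', 0 < z' < z -> Rabs (f z - f z') <= X) -> Rabs (f z) <= X.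
Proof.
  intros Hs Hz Hb. destruct (Rle_lt_dec (Rabs (f z)) X) as [|Hlt]; auto.
  destruct (Hs (Rabs (f z) - X) ltac:(lra)) as [d [Hd Ht]].
  set (z' := Rmin d z / 2).
  assert (0 < Rmin d z) by (apply Rmin_pos; lra).
  assert (Rmin d z <= d) by apply Rmin_l. assert (Rmin d z <= z) by apply Rmin_r.
  assert (A1 := Ht z' ltac:(unfold z'; lra)).
  assert (A2 := Hb z' ltac:(unfold z'; lra)).
  assert (A3 := Rabs_triang_inv (f z) (f z')). lra.
Qed.

Lemma power_bound_of_vanishing (phi dphi : R -> R) (C : R) (n : nat) (z : R) :
  vanishes_at_0 phi -> 0 < z ->
  (forall c, 0 < c <= z -> derivable_pt_lim phi c (dphi c)) ->
  (forall c, 0 < c <= z -> Rabs (dphi c) <= C * c ^ n) ->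
  Rabs (phi z) <= C / INR (S n) * z ^ S n.
Proof.
  intros Hvan Hz Hd Hb.
  assert (HC : 0 <= C).
  { assert (H := Hb z ltac:(lra)). assert (Hzn := pow_lt z n Hz).
    assert (H0 := Rabs_pos (dphi z)). nra. }
  assert (Hn : 0 < INR (S n)) by apply lt_0_INR, Nat.lt_0_succ.
  apply bound_of_vanishing; auto. intros z' Hz'.
  assert (K := mean_value_comparison phi dphi (fun y => C / INR (S n) * y ^ S n)
                 (fun y => C * y ^ n) z' z ltac:(lra)).
  assert (0 <= C / INR (S n) * z' ^ S n).
  { apply Rmult_le_pos; [apply Rmult_le_pos; [|apply Rlt_le, Rinv_0_lt_compat]|apply pow_le]; lra. }
  rewrite Rabs_minus_sym.
  enough (Rabs (phi z - phi z') <= C / INR (S n) * z ^ S n - C / INR (S n) * z' ^ S n)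
    by (rewrite Rabs_minus_sym; lra).
  apply K; intros c Hc.
  - apply Hd; lra.
  - apply derivable_pt_lim_power_primitive.
  - apply Hb; lra.
Qed.

Lemma riemann_integral_lower_bound (f : R -> R) (a b c : R)
  (pr : Riemann_integrable f a b) :
  a <= b -> (forall x, a < x < b -> c <= f x) -> c * (b - a) <= RiemannInt pr.
Proof.
  intros Hab Hb. rewrite <- (RiemannInt_P15 (RiemannInt_P14 a b c)).
  apply RiemannInt_P19; auto.
Qed.

Lemma riemann_integral_upper_bound (f : R -> R) (a b d : R)
  (pr : Riemann_integrable f a b) :
  a <= b -> (forall x, a < x < b -> f x <= d) -> RiemannInt pr <= d * (b - a).
Proof.
  intros Hab Hb. rewrite <- (RiemannInt_P15 (RiemannInt_P14 a b d)).
  apply RiemannInt_P19; auto.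
Qed.

Section Bootstrap.

Variables (phi dphi w dw : R -> R) (eta A0 Q : R).
Hypothesis Heta : 0 < eta.
Hypothesis HA0 : 0 < A0.
Hypothesis HQ : 0 <= Q.
Hypothesis Hshort : Q * eta ^ 2 <= A0 / 2.
Hypothesis Hphi : forall t, 0 < t <= eta -> derivable_pt_lim phi t (dphi t).
Hypothesis Hw : forall t, 0 < t <= eta -> derivable_pt_lim w t (dw t).
Hypothesis Hdw : forall t, 0 < t <= eta -> Rabs (dw t) <= Q * Rabs (phi t) / t ^ 2.
Hypothesis Hflux : forall t, 0 < t <= eta -> A0 * Rabs (dphi t) <= t ^ 2 * Rabs (w t).

Lemma dphi_of_flux_bound (t X : R) : 0 < t <= eta -> Rabs (w t) <= X ->
  Rabs (dphi t) <= t ^ 2 * X / A0.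
Proof.
  intros Ht HX. apply (Rmult_le_reg_l A0); auto.
  replace (A0 * (t ^ 2 * X / A0)) with (t ^ 2 * X) by (field; lra).
  eapply Rle_trans; [apply Hflux; auto|].
  apply Rmult_le_compat_l; [apply pow_le; lra|exact HX].
Qed.

Lemma flux_bound (Mb z : R) : 0 <= Mb -> 0 < z <= eta ->
  (forall t, z <= t <= eta -> Rabs (phi t) <= Mb) ->
  Rabs (w z) <= Rabs (w eta) + Q * Mb / z.
Proof.
  intros HMb Hz Hb.
  assert (K := mean_value_comparison w dw (fun x => - (Q * Mb) / x)
                 (fun x => Q * Mb / x ^ 2) z eta ltac:(lra)).
  assert (Hinc : Rabs (w eta - w z) <= Q * Mb / z - Q * Mb / eta).
  { replace (Q * Mb / z - Q * Mb / eta) with (- (Q * Mb) / eta - - (Q * Mb) / z)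
      by (field; lra).
    apply K; intros c Hc.
    - apply Hw; lra.
    - apply derivable_pt_lim_recip; lra.
    - eapply Rle_trans; [apply Hdw; lra|].
      assert (Hc2 : 0 < c ^ 2) by (apply pow_lt; lra).
      unfold Rdiv. apply Rmult_le_compat_r; [apply Rlt_le, Rinv_0_lt_compat; lra|].
      apply Rmult_le_compat_l; [lra|apply Hb; lra]. }
  rewrite Rabs_minus_sym in Hinc.
  assert (E := Rabs_triang_inv (w z) (w eta)).
  assert (0 <= Q * Mb / eta)
    by (apply Rmult_le_pos; [nra|apply Rlt_le, Rinv_0_lt_compat; lra]).
  lra.
Qed.

(* First step: phi is bounded near 0.  The maximum Mz of |phi| on [z, eta] satisfies
   Mz <= |phi eta| + |w eta| eta^3/A0 + Mz/2 by the shortness of the interval. *)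
Lemma phi_bounded : exists B, 0 <= B /\ forall z, 0 < z <= eta -> Rabs (phi z) <= B.
Proof.
  set (W1 := Rabs (w eta)). assert (HW1 : 0 <= W1) by apply Rabs_pos.
  set (B := 2 * (Rabs (phi eta) + W1 * eta ^ 3 / A0)).
  assert (HB : 0 <= B).
  { assert (0 <= W1 * eta ^ 3 / A0).
    { apply Rmult_le_pos; [apply Rmult_le_pos; [lra|apply pow_le; lra]|].
      apply Rlt_le, Rinv_0_lt_compat; lra. }
    pose proof (Rabs_pos (phi eta)). unfold B; lra. }
  exists B. split; [exact HB|]. intros z Hz.
  destruct (continuity_ab_maj (fun t => Rabs (phi t)) z eta ltac:(lra)) as [xm [Hxm1 Hxm2]].
  { intros c Hc. apply (continuity_pt_comp phi Rabs).
    - eapply derivable_pt_lim_continuity, Hphi; lra.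
    - apply Rcontinuity_abs. }
  set (Mz := Rabs (phi xm)). assert (HMz : 0 <= Mz) by apply Rabs_pos.
  set (Kc := (W1 * eta ^ 2 + Q * Mz * eta) / A0).
  assert (HKc : 0 <= Kc).
  { unfold Kc. apply Rmult_le_pos; [|apply Rlt_le, Rinv_0_lt_compat; lra].
    assert (0 <= W1 * eta ^ 2) by (apply Rmult_le_pos; [lra|apply pow_le; lra]).
    assert (0 <= Q * Mz * eta) by (apply Rmult_le_pos; nra). lra. }
  assert (Hinc : Rabs (phi eta - phi xm) <= Kc * (eta - xm)).
  { apply (bounded_derivative_increment phi dphi); try lra; intros c Hc.
    - apply Hphi; lra.
    - assert (Hwc := flux_bound Mz c HMz ltac:(lra)
                       ltac:(intros t Ht; apply (Hxm1 t); lra)).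
      fold W1 in Hwc.
      eapply Rle_trans; [apply (dphi_of_flux_bound c _ ltac:(lra) Hwc)|].
      unfold Kc, Rdiv. apply Rmult_le_compat_r; [apply Rlt_le, Rinv_0_lt_compat; lra|].
      replace (c ^ 2 * (W1 + Q * Mz * / c)) with (W1 * c ^ 2 + Q * Mz * c)
        by (field; lra).
      assert (W1 * c ^ 2 <= W1 * eta ^ 2)
        by (apply Rmult_le_compat_l; [lra|apply pow_incr; lra]).
      assert (Q * Mz * c <= Q * Mz * eta) by (apply Rmult_le_compat_l; nra).
      lra. }
  rewrite Rabs_minus_sym in Hinc.
  assert (E := Rabs_triang_inv (phi xm) (phi eta)).
  assert (Kc * eta = W1 * eta ^ 3 / A0 + Mz * (Q * eta ^ 2 / A0))
    by (unfold Kc; field; lra).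
  assert (Q * eta ^ 2 / A0 <= 1 / 2).
  { apply (Rmult_le_reg_r A0); auto.
    replace (Q * eta ^ 2 / A0 * A0) with (Q * eta ^ 2) by (field; lra). lra. }
  assert (Mz * (Q * eta ^ 2 / A0) <= Mz * (1 / 2)) by (apply Rmult_le_compat_l; lra).
  assert (Hzz := Hxm1 z ltac:(lra)). simpl in Hzz. fold Mz in Hzz.
  assert (Kc * (eta - xm) <= Kc * eta) by nra.
  unfold B, Mz in *. lra.
Qed.

Lemma dphi_linear_bound :
  exists C1, 0 <= C1 /\ forall t, 0 < t <= eta -> Rabs (dphi t) <= C1 * t.
Proof.
  destruct phi_bounded as [B [HB HphiB]].
  set (W1 := Rabs (w eta)). assert (HW1 : 0 <= W1) by apply Rabs_pos.
  exists ((W1 * eta + Q * B) / A0). split.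
  { apply Rmult_le_pos; [|apply Rlt_le, Rinv_0_lt_compat; lra].
    assert (0 <= Q * B) by nra. nra. }
  intros t Ht.
  assert (Hwt := flux_bound B t HB Ht ltac:(intros u Hu; apply HphiB; lra)).
  eapply Rle_trans; [apply (dphi_of_flux_bound t _ Ht Hwt)|].
  replace (t ^ 2 * (Rabs (w eta) + Q * B / t) / A0) with (t * (W1 * t + Q * B) / A0)
    by (unfold W1; field; lra).
  replace ((W1 * eta + Q * B) / A0 * t) with (t * (W1 * eta + Q * B) / A0)
    by (field; lra).
  unfold Rdiv. apply Rmult_le_compat_r; [apply Rlt_le, Rinv_0_lt_compat; lra|].
  apply Rmult_le_compat_l; nra.
Qed.

Hypothesis Hvanish : vanishes_at_0 phi.

Lemma phi_quadratic_bound :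
  exists C2, 0 <= C2 /\ forall z, 0 < z <= eta -> Rabs (phi z) <= C2 * z ^ 2.
Proof.
  destruct dphi_linear_bound as [C1 [HC1 Hlin]].
  exists (C1 / INR 2). split.
  { apply Rmult_le_pos; [lra|apply Rlt_le, Rinv_0_lt_compat; simpl; lra]. }
  intros z Hz. apply (power_bound_of_vanishing phi dphi C1 1); try tauto.
  - intros c Hc. apply Hphi; lra.
  - intros c Hc. rewrite pow_1. apply Hlin; lra.
Qed.

(* Fourth step: w' is then bounded, so w is bounded and |phi'(t)| <= C3 t^2. *)
Lemma dphi_quadratic_bound :
  exists C3, 0 <= C3 /\ forall t, 0 < t <= eta -> Rabs (dphi t) <= C3 * t ^ 2.
Proof.
  destruct phi_quadratic_bound as [C2 [HC2 Hquad]].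
  set (W2 := Rabs (w eta) + Q * C2 * eta).
  assert (HW2 : 0 <= W2).
  { pose proof (Rabs_pos (w eta)). assert (0 <= Q * C2 * eta) by (apply Rmult_le_pos; nra).
    unfold W2; lra. }
  exists (W2 / A0). split; [apply Rmult_le_pos; [lra|apply Rlt_le, Rinv_0_lt_compat; lra]|].
  intros t Ht.
  assert (Hinc : Rabs (w eta - w t) <= Q * C2 * (eta - t)).
  { apply (bounded_derivative_increment w dw); try lra; intros c Hc.
    - apply Hw; lra.
    - eapply Rle_trans; [apply Hdw; lra|].
      assert (Hc2 : 0 < c ^ 2) by (apply pow_lt; lra).
      apply (Rmult_le_reg_r (c ^ 2)); auto.
      replace (Q * Rabs (phi c) / c ^ 2 * c ^ 2) with (Q * Rabs (phi c)) by (field; lra).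
      rewrite Rmult_assoc. apply Rmult_le_compat_l; [lra|apply Hquad; lra]. }
  rewrite Rabs_minus_sym in Hinc.
  assert (E := Rabs_triang_inv (w t) (w eta)).
  assert (0 <= Q * C2 * t) by (apply Rmult_le_pos; [apply Rmult_le_pos|]; lra).
  assert (Hwt : Rabs (w t) <= W2) by (unfold W2; lra).
  eapply Rle_trans; [apply (dphi_of_flux_bound t _ Ht Hwt)|].
  right. field. lra.
Qed.

Lemma cubic_decay : exists C, 0 < C /\ forall z, 0 < z <= eta ->
  Rabs (phi z) <= C * z ^ 3 /\ Rabs (dphi z) <= C * z ^ 2.
Proof.
  destruct dphi_quadratic_bound as [C3 [HC3 Hquad]].
  exists (C3 + 1). split; [lra|]. intros z Hz.
  assert (Hz2 : 0 < z ^ 2) by (apply pow_lt; lra).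
  assert (Hz3 : 0 < z ^ 3) by (apply pow_lt; lra).
  split.
  - eapply Rle_trans.
    + apply (power_bound_of_vanishing phi dphi C3 2); try tauto.
      * intros c Hc. apply Hphi; lra.
      * intros c Hc. apply Hquad; lra.
    + assert (C3 / INR 3 <= C3 + 1).
      { simpl. apply (Rmult_le_reg_r 3); [lra|].
        replace (C3 / (1 + 1 + 1) * 3) with C3 by field. lra. }
      apply Rmult_le_compat_r; lra.
  - eapply Rle_trans; [apply Hquad; lra|]. apply Rmult_le_compat_r; lra.
Qed.

End Bootstrap.

Lemma smooth_on_second_derivative (a b : R) (phi dphi : R -> R) :
  smooth_on a b phi -> (forall t, a < t < b -> derivable_pt_lim phi t (dphi t)) ->
  exists d2phi, forall t, a < t < b -> derivable_pt_lim dphi t (d2phi t).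
Proof.
  intros [D [HD0 HD]] Hdphi.
  assert (HD1 : forall t, a < t < b -> dphi t = D 1%nat t).
  { intros t Ht. apply (uniqueness_limite phi t); auto.
    apply (derivable_pt_lim_local (D 0%nat) phi t _ a b); auto. }
  exists (D 2%nat). intros t Ht.
  apply (derivable_pt_lim_local (D 1%nat) dphi t _ a b); auto.
  intros y Hy. symmetry; auto.
Qed.

Lemma smooth_on_derivative_continuous (a b : R) (phi dphi : R -> R) :
  smooth_on a b phi -> (forall t, a < t < b -> derivable_pt_lim phi t (dphi t)) ->
  forall t, a < t < b -> continuity_pt dphi t.
Proof.
  intros Hsm Hd t Ht. destruct (smooth_on_second_derivative a b phi dphi Hsm Hd) as [d2 Hd2].
  exact (derivable_pt_lim_continuity _ _ _ (Hd2 t Ht)).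
Qed.

Lemma smooth_R_smooth_on (a b : R) (f : R -> R) : smooth_R f -> smooth_on a b f.
Proof. intros [D [HD0 HD]]. exists D. split; auto. Qed.

Lemma continuity_pt_square (F : R -> R) (x : R) :
  continuity_pt F x -> continuity_pt (fun z => F z ^ 2) x.
Proof.
  intro H. apply (continuity_pt_comp F (fun y => y ^ 2) x H).
  exact (derivable_pt_lim_continuity _ _ _ (derivable_pt_lim_pow _ 2)).
Qed.

Lemma weighted_energy_integrable (g h : R -> R) (a b : R) : 0 < a <= b ->
  (forall x, a <= x <= b -> continuity_pt g x) ->
  (forall x, a <= x <= b -> continuity_pt h x) ->
  Riemann_integrable (fun z => (h z ^ 2 + g z ^ 2) / z ^ 2) a b.
Proof.
  intros Hab Hg Hh. apply continuity_implies_RiemannInt; [lra|]. intros x Hx.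
  apply continuity_pt_div.
  - apply continuity_pt_plus; apply continuity_pt_square; [apply Hh|apply Hg]; lra.
  - exact (derivable_pt_lim_continuity _ _ _ (derivable_pt_lim_pow x 2)).
  - apply pow_nonzero; lra.
Qed.

(* The weight 1/z^2 is not integrable at 0: a gap |g| >= c on [t/2, t] costs
   energy at least c^2/(2t). *)
Lemma weighted_energy_lower_bound (g h : R -> R) (t c : R)
  (pr : Riemann_integrable (fun z => (h z ^ 2 + g z ^ 2) / z ^ 2) (t / 2) t) :
  0 < t -> 0 <= c -> (forall y, t / 2 <= y <= t -> c <= Rabs (g y)) ->
  c ^ 2 / (2 * t) <= RiemannInt pr.
Proof.
  intros Ht Hc Hgap.
  replace (c ^ 2 / (2 * t)) with (c ^ 2 / (t * t) * (t - t / 2)) by (field; lra).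
  apply riemann_integral_lower_bound; [lra|]. intros x Hx.
  assert (Hgx := Hgap x ltac:(lra)).
  assert (c ^ 2 <= g x ^ 2)
    by (rewrite <- (pow2_abs (g x)); apply pow_incr; lra).
  assert (0 <= h x ^ 2) by apply pow2_ge_0.
  assert (Hxt : x * x <= t * t) by nra.
  unfold Rdiv. apply Rmult_le_compat; try nra.
  - apply Rlt_le, Rinv_0_lt_compat. nra.
  - simpl. rewrite Rmult_1_r. apply Rinv_le_contravar; nra.
Qed.

(* An element of H^1_2 with bounded derivative near 0 tends to 0 at 0: otherwise
   |phi| >= e on some [t/2, t], while a smooth approximant u with u(0) = 0 is
   below e/4 there, so the weighted energy int |u - phi|^2 / z^2 >= e^2/(8t) blows up. *)
Lemma h12_vanishes_at_0 (Rad : R) (phi dphi : R -> R) (eta L : R) : 0 < eta < Rad ->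
  (forall t, 0 < t < Rad -> derivable_pt_lim phi t (dphi t)) ->
  (forall t, 0 < t < Rad -> continuity_pt dphi t) ->
  in_H12 Rad phi dphi ->
  (forall t, 0 < t <= eta -> Rabs (dphi t) <= L) ->
  vanishes_at_0 phi.
Proof.
  intros Heta Hphi Hcd [u [du [Hsu [Hdu [Hu0 Hconv]]]]] HL e He.
  destruct (Hconv 1 Rlt_0_1) as [N HN]. specialize (HN N (le_n N)).
  assert (Hcdu : forall x, continuity_pt (du N) x).
  { intro x. apply (smooth_on_derivative_continuous (x - 1) (x + 1) (u N));
      [apply smooth_R_smooth_on, Hsu|intros; apply Hdu|lra]. }
  assert (Hcu : forall x, continuity_pt (u N) x)
    by (intro x; eapply derivable_pt_lim_continuity, Hdu).
  destruct (continuous_vanishes_at_0 (u N) (Hcu 0) (Hu0 N) (e / 4) ltac:(lra))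
    as [delta_u [Hdelta_u Hsmallu]].
  set (L' := Rabs L + 1).
  assert (HL' : 0 < L') by (unfold L'; pose proof (Rabs_pos L); lra).
  set (d := Rmin eta (Rmin delta_u (Rmin (e / (2 * L')) (e * e / 8)))).
  assert (Hd : 0 < d) by (unfold d; repeat apply Rmin_pos; try lra;
                          apply Rdiv_lt_0_compat; nra).
  exists d. split; [exact Hd|]. intros t Ht.
  assert (Hd1 : d <= eta) by apply Rmin_l.
  assert (Hd2 : d <= delta_u) by (unfold d; eapply Rle_trans; [apply Rmin_r|apply Rmin_l]).
  assert (Hd3 : d <= e / (2 * L'))
    by (unfold d; do 2 (eapply Rle_trans; [apply Rmin_r|]); apply Rmin_l).
  assert (Hd4 : d <= e * e / 8)
    by (unfold d; do 2 (eapply Rle_trans; [apply Rmin_r|]); apply Rmin_r).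
  destruct (Rlt_le_dec (Rabs (phi t)) e) as [|Hge]; auto. exfalso.
  assert (Hgap : forall y, t / 2 <= y <= t -> e / 2 <= Rabs (u N y - phi y)).
  { intros y Hy.
    assert (Hinc : Rabs (phi t - phi y) <= L' * (t - y)).
    { apply (bounded_derivative_increment phi dphi); try lra; intros c Hc.
      - apply Hphi; lra.
      - eapply Rle_trans; [apply HL; lra|]. pose proof (Rle_abs L). unfold L'; lra. }
    assert (L' * (t - y) <= e / 4).
    { assert (L' * t <= L' * (e / (2 * L'))) by (apply Rmult_le_compat_l; lra).
      replace (L' * (e / (2 * L'))) with (e / 2) in H by (field; lra). nra. }
    assert (Hu := Hsmallu y ltac:(lra)).
    assert (T1 := Rabs_triang_inv (phi t) (phi y)).
    assert (T2 := Rabs_triang_inv (phi y) (u N y)).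
    rewrite Rabs_minus_sym in T2. lra. }
  assert (pr := weighted_energy_integrable (fun z => u N z - phi z)
                  (fun z => du N z - dphi z) (t / 2) t ltac:(lra)
                  ltac:(intros x Hx; apply continuity_pt_minus;
                        [|eapply derivable_pt_lim_continuity, Hphi]; auto; lra)
                  ltac:(intros x Hx; apply continuity_pt_minus; [|apply Hcd]; auto; lra)).
  assert (Henergy := HN (t / 2) t pr ltac:(lra) ltac:(lra) ltac:(lra)).
  assert (Hlow := weighted_energy_lower_bound _ _ t (e / 2) pr ltac:(lra) ltac:(lra) Hgap).
  assert (Hbig : 1 < (e / 2) ^ 2 / (2 * t)).
  { apply (Rmult_lt_reg_r (8 * t)); [lra|].
    replace ((e / 2) ^ 2 / (2 * t) * (8 * t)) with (e * e) by (field; lra). lra. }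
  lra.
Qed.

Lemma lane_emden_density_bounded (K gam Rad : R) (rho0 : R -> R) :
  lane_emden K gam Rad rho0 ->
  exists M, 0 < M /\ forall y, 0 <= y <= Rad / 2 -> 0 < rho0 y <= M.
Proof.
  intros [HR [[eg [g [Heg [[Dg [HDg0 HDg]] Hgr]]]] [Hpos _]]].
  destruct (continuity_ab_maj g 0 (Rad / 2) ltac:(lra)) as [xm [Hxm _]].
  { intros c Hc. apply (derivable_pt_lim_continuity _ _ (Dg 1%nat c)).
    apply (derivable_pt_lim_local (Dg 0%nat) g c _ (- eg) Rad); [lra|exact HDg0|].
    apply HDg; lra. }
  exists (Rmax (g xm) 1). split; [apply Rlt_le_trans with 1; [lra|apply Rmax_r]|].
  intros y Hy. split; [apply Hpos; lra|].
  rewrite <- Hgr by lra. eapply Rle_trans; [apply Hxm; auto|apply Rmax_l].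
Qed.

Lemma enclosed_mass_bound (rho0 : R -> R) (M t m : R) : 0 < t ->
  (forall y, 0 <= y <= t -> 0 < rho0 y <= M) ->
  is_RInt (fun y => rho0 y * y ^ 2) 0 t m -> 0 <= m <= M * t ^ 3.
Proof.
  intros Ht Hrho [pr Hpr]. rewrite <- Hpr. split.
  - apply Rle_trans with (0 * (t - 0)); [lra|].
    apply riemann_integral_lower_bound; [lra|]. intros x Hx.
    assert (Hr := Hrho x ltac:(lra)). assert (0 <= x ^ 2) by (apply pow_le; lra). nra.
  - replace (M * t ^ 3) with (M * t ^ 2 * (t - 0)) by ring.
    apply riemann_integral_upper_bound; [lra|]. intros x Hx.
    assert (Hr := Hrho x ltac:(lra)).
    assert (x ^ 2 <= t ^ 2) by (apply pow_incr; lra).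
    assert (0 <= x ^ 2) by (apply pow_le; lra). nra.
Qed.

Lemma rpow_nonneg (x y : R) : 0 <= rpow x y.
Proof. unfold rpow. destruct (Rlt_dec 0 x); [left; apply exp_pos|lra]. Qed.

(* The flux (A0 + gamma P0) phi' / z^2 whose derivative appears in the equation. *)
Definition flux (A0 K gam : R) (rho0 dphi : R -> R) (x : R) : R :=
  (A0 + gam * (K * rpow (rho0 x) gam)) * dphi x / x ^ 2.

(* Since P0 >= 0 the flux controls phi'. *)
Lemma flux_dominates_dphi (A0 K gam : R) (rho0 dphi : R -> R) (t : R) :
  0 < A0 -> 0 < K -> 0 < gam -> 0 < t ->
  A0 * Rabs (dphi t) <= t ^ 2 * Rabs (flux A0 K gam rho0 dphi t).
Proof.
  intros HA0 HK Hgam Ht. unfold flux.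
  assert (HP := rpow_nonneg (rho0 t) gam).
  assert (Ht2 : 0 < t ^ 2) by (apply pow_lt; lra).
  assert (HAP : A0 <= A0 + gam * (K * rpow (rho0 t) gam))
    by (assert (0 <= K * rpow (rho0 t) gam) by nra; nra).
  unfold Rdiv. rewrite !Rabs_mult, (Rabs_pos_eq (/ t ^ 2)), (Rabs_pos_eq (_ + _))
    by (try apply Rlt_le, Rinv_0_lt_compat; lra).
  replace (t ^ 2 * ((A0 + gam * (K * rpow (rho0 t) gam)) * Rabs (dphi t) * / t ^ 2))
    with ((A0 + gam * (K * rpow (rho0 t) gam)) * Rabs (dphi t)) by (field; lra).
  apply Rmult_le_compat_r; [apply Rabs_pos|exact HAP].
Qed.

Lemma flux_derivable (A0 K gam : R) (rho0 dphi : R -> R) (t dP d2 : R) : 0 < t ->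
  derivable_pt_lim (fun x => K * rpow (rho0 x) gam) t dP ->
  derivable_pt_lim dphi t d2 ->
  exists l, derivable_pt_lim (flux A0 K gam rho0 dphi) t l.
Proof.
  intros Ht HdP Hd2. eexists. unfold flux.
  apply (derivable_pt_lim_div (fun x => (A0 + gam * (K * rpow (rho0 x) gam)) * dphi x)
           (fun x => x ^ 2)).
  - apply (derivable_pt_lim_mult (fun x => A0 + gam * (K * rpow (rho0 x) gam)) dphi).
    + apply (derivable_pt_lim_plus (fct_cte A0)
               (mult_real_fct gam (fun x => K * rpow (rho0 x) gam))).
      * apply derivable_pt_lim_const.
      * apply derivable_pt_lim_scal. exact HdP.
    + exact Hd2.
  - apply derivable_pt_lim_pow.
  - apply pow_nonzero; lra.
Qed.

Lemma gravity_coefficient_bound (rho M m t mu : R) : 0 < t -> 0 < rho <= M ->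
  0 <= m <= M * t ^ 3 ->
  Rabs (16 * PI * rho * (m / t ^ 3) + mu * rho) <= 16 * PI * M ^ 2 + Rabs mu * M.
Proof.
  intros Ht Hrho Hm. assert (HPI := PI_RGT_0).
  assert (Ht3 : 0 < t ^ 3) by (apply pow_lt; lra).
  assert (Hmt : 0 <= m / t ^ 3 <= M).
  { split; [apply Rmult_le_pos; [lra|apply Rlt_le, Rinv_0_lt_compat; lra]|].
    apply (Rmult_le_reg_r (t ^ 3)); auto.
    replace (m / t ^ 3 * t ^ 3) with m by (field; lra). lra. }
  assert (Hg : 0 <= 16 * PI * rho * (m / t ^ 3) <= 16 * PI * M ^ 2).
  { split; [apply Rmult_le_pos; [apply Rmult_le_pos|]; lra|].
    replace (16 * PI * M ^ 2) with (16 * PI * M * M) by ring.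
    apply Rmult_le_compat; try nra. }
  eapply Rle_trans; [apply Rabs_triang|].
  rewrite (Rabs_pos_eq (16 * PI * rho * (m / t ^ 3))), Rabs_mult, (Rabs_pos_eq rho) by lra.
  assert (Rabs mu * rho <= Rabs mu * M) by (apply Rmult_le_compat_l; [apply Rabs_pos|lra]).
  lra.
Qed.

(* The radial equation turns into  w' = -(16 pi rho0 m/t^3 + mu rho0) phi / t^2  for the
   flux w, using hydrostatic equilibrium P0' = -4 pi rho0 m / t^2; hence
   |w'| <= Q |phi| / t^2 on (0, Rad/2]. *)
Lemma flux_derivative_bound (A0 K gam Rad mu M : R) (rho0 phi dphi d2phi : R -> R) :
  lane_emden K gam Rad rho0 ->
  (forall y, 0 <= y <= Rad / 2 -> 0 < rho0 y <= M) ->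
  (forall t, 0 < t < Rad -> derivable_pt_lim dphi t (d2phi t)) ->
  (forall z dF dP, 0 < z < Rad ->
     derivable_pt_lim (flux A0 K gam rho0 dphi) z dF ->
     derivable_pt_lim (fun x => K * rpow (rho0 x) gam) z dP ->
     - dF + 4 * dP / z ^ 3 * phi z = mu * rho0 z / z ^ 2 * phi z) ->
  exists dw, forall t, 0 < t <= Rad / 2 ->
    derivable_pt_lim (flux A0 K gam rho0 dphi) t (dw t) /\
    Rabs (dw t) <= (16 * PI * M ^ 2 + Rabs mu * M) * Rabs (phi t) / t ^ 2.
Proof.
  intros HLE HrhoM Hd2 Hode.
  destruct HLE as [HR [_ [_ [_ [Hhyd _]]]]].
  apply (choice (fun t l => 0 < t <= Rad / 2 ->
    derivable_pt_lim (flux A0 K gam rho0 dphi) t l /\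
    Rabs l <= (16 * PI * M ^ 2 + Rabs mu * M) * Rabs (phi t) / t ^ 2)).
  intro t. destruct (classic (0 < t <= Rad / 2)) as [Ht|Ht]; [|exists 0; tauto].
  destruct (Hhyd t ltac:(lra)) as [m [Hm HdP]].
  destruct (flux_derivable A0 K gam rho0 dphi t _ _ ltac:(lra) HdP (Hd2 t ltac:(lra)))
    as [l Hl].
  exists l. intros _. split; [exact Hl|].
  assert (Hmass := enclosed_mass_bound rho0 M t m ltac:(lra)
                     ltac:(intros y Hy; apply HrhoM; lra) Hm).
  assert (Hcoef := gravity_coefficient_bound (rho0 t) M m t mu ltac:(lra)
                     (HrhoM t ltac:(lra)) Hmass).
  assert (Ht2 : 0 < t ^ 2) by (apply pow_lt; lra).
  assert (Hl_eq : l = - (16 * PI * rho0 t * (m / t ^ 3) + mu * rho0 t) * phi t / t ^ 2).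
  { assert (Heq := Hode t l _ ltac:(lra) Hl HdP).
    replace l with (4 * (- (4 * PI * rho0 t / t ^ 2) * m) / t ^ 3 * phi t
                    - mu * rho0 t / t ^ 2 * phi t) by lra.
    field. lra. }
  rewrite Hl_eq. unfold Rdiv.
  rewrite !Rabs_mult, Rabs_Ropp, (Rabs_pos_eq (/ t ^ 2))
    by (apply Rlt_le, Rinv_0_lt_compat; lra).
  apply Rmult_le_compat_r; [apply Rlt_le, Rinv_0_lt_compat; lra|].
  apply Rmult_le_compat_r; [apply Rabs_pos|exact Hcoef].
Qed.

Lemma short_radius (A0 Q r : R) : 0 < A0 -> 0 <= Q -> 0 < r ->
  exists eta, 0 < eta <= r /\ Q * eta ^ 2 <= A0 / 2.
Proof.
  intros HA0 HQ Hr.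
  set (eta := Rmin r (Rmin 1 (A0 / (2 * (Q + 1))))).
  assert (He1 : eta <= r) by apply Rmin_l.
  assert (He2 : eta <= 1) by (unfold eta; eapply Rle_trans; [apply Rmin_r|apply Rmin_l]).
  assert (He3 : eta <= A0 / (2 * (Q + 1)))
    by (unfold eta; eapply Rle_trans; [apply Rmin_r|apply Rmin_r]).
  assert (Hpos : 0 < eta)
    by (unfold eta; repeat apply Rmin_pos; try lra; apply Rdiv_lt_0_compat; lra).
  exists eta. split; [lra|].
  assert ((Q + 1) * eta <= A0 / 2).
  { replace (A0 / 2) with ((Q + 1) * (A0 / (2 * (Q + 1)))) by (field; lra).
    apply Rmult_le_compat_l; lra. }
  assert (eta ^ 2 <= eta) by (simpl; nra). nra.
Qed.

Theorem lemma2p6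
  (eps delta K gam Rad : R) (rho0 : R -> R)
  (Heps : 0 < eps) (Hdelta : 0 < delta) (HK : 0 < K)
  (Hgam : 6 / 5 < gam < 4 / 3)
  (HLE : lane_emden K gam Rad rho0)
  (s mu : R) (Hs : 0 < s)
  (phi dphi : R -> R)
  (Hsm : smooth_on 0 Rad phi)
  (Hdphi : forall z, 0 < z < Rad -> derivable_pt_lim phi z (dphi z))
  (HH : in_H12 Rad phi dphi)
  (Hode : forall z dF dP, 0 < z < Rad ->
     derivable_pt_lim
       (fun x => (4 * (s * eps) / 3 + s * delta + gam * (K * rpow (rho0 x) gam))
                 * dphi x / x ^ 2) z dF ->
     derivable_pt_lim (fun x => K * rpow (rho0 x) gam) z dP ->
     - dF + 4 * dP / z ^ 3 * phi z = mu * rho0 z / z ^ 2 * phi z) :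
  exists C eta, 0 < C /\ 0 < eta /\
    forall z, 0 < z < eta ->
      Rabs (phi z) <= C * z ^ 3 /\ Rabs (dphi z) <= C * z ^ 2.
Proof.
  assert (HR : 0 < Rad) by apply HLE.
  set (A0 := 4 * (s * eps) / 3 + s * delta). assert (HA0 : 0 < A0) by (unfold A0; nra).
  destruct (smooth_on_second_derivative 0 Rad phi dphi Hsm Hdphi) as [d2phi Hd2].
  destruct (lane_emden_density_bounded K gam Rad rho0 HLE) as [M [HM HrhoM]].
  set (Q := 16 * PI * M ^ 2 + Rabs mu * M).
  assert (HQ : 0 <= Q) by (pose proof PI_RGT_0; pose proof (Rabs_pos mu); unfold Q; nra).
  destruct (flux_derivative_bound A0 K gam Rad mu M rho0 phi dphi d2phi HLE HrhoM Hd2 Hode)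
    as [dw Hdw].
  destruct (short_radius A0 Q (Rad / 2) HA0 HQ ltac:(lra)) as [eta [Heta Hshort]].
  assert (Hphi : forall t, 0 < t <= eta -> derivable_pt_lim phi t (dphi t))
    by (intros t Ht; apply Hdphi; lra).
  assert (Hw : forall t, 0 < t <= eta ->
            derivable_pt_lim (flux A0 K gam rho0 dphi) t (dw t))
    by (intros t Ht; apply Hdw; lra).
  assert (Hdw' : forall t, 0 < t <= eta -> Rabs (dw t) <= Q * Rabs (phi t) / t ^ 2)
    by (intros t Ht; apply Hdw; lra).
  assert (Hflux : forall t, 0 < t <= eta ->
     A0 * Rabs (dphi t) <= t ^ 2 * Rabs (flux A0 K gam rho0 dphi t))
    by (intros t Ht; apply flux_dominates_dphi; lra).
  (* phi' is O(t), hence bounded, near 0; so phi in H^1_2 tends to 0 at 0. *)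
  destruct (dphi_linear_bound phi dphi _ dw eta A0 Q ltac:(lra) HA0 HQ Hshort
              Hphi Hw Hdw' Hflux) as [C1 [HC1 Hlin]].
  assert (Hvan : vanishes_at_0 phi).
  { apply (h12_vanishes_at_0 Rad phi dphi eta (C1 * eta)); auto; try lra.
    - apply (smooth_on_derivative_continuous 0 Rad phi dphi Hsm Hdphi).
    - intros t Ht. eapply Rle_trans; [apply Hlin, Ht|]. apply Rmult_le_compat_l; lra. }
  destruct (cubic_decay phi dphi _ dw eta A0 Q ltac:(lra) HA0 HQ Hshort
              Hphi Hw Hdw' Hflux Hvan) as [C [HC Hdecay]].
  exists C, eta. repeat split; try lra; apply Hdecay; lra.
Qed.
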